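(* Let $f\colon\mathbb{R}^n\to\mathbb{R}$ be differentiable, $L>0$, $0<t\le1$, and $\{\theta_k\}_{k=0}^\infty$ a positive sequence. Given $x_0$, define sequence (I) by $y_0=z_0=x_0$ and for $k\ge0$ \[ y_{k+1}=x_k-\tfrac1L\nabla f(x_k),\quad z_{k+1}=z_k-\tfrac{2t\theta_k}{L}\nabla f(x_k),\quad x_{k+1}=\Big(1-\tfrac1{\theta_{k+1}}\Big)y_{k+1}+\tfrac1{\theta_{k+1}}z_{k+1}, \] and sequence (II) by $y_0'=x_0'=x_0$ and for $k\ge0$ \[ y'_{k+1}=x'_k-\tfrac1L\nabla f(x'_k),\quad x'_{k+1}=y'_{k+1}+\frac{\theta_k-1}{\theta_{k+1}}(y'_{k+1}-y'_k)+(2t-1)\frac{\theta_k}{\theta_{k+1}}(y'_{k+1}-x'_k). \] Then $x_k=x'_k$ and $y_k=y'_k$ for all $k\ge0$. *)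

From HB Require Import structures.
From mathcomp Require Import all_boot all_order all_algebra.
From mathcomp Require Import all_classical all_reals all_analysis.
Set Implicit Arguments. Unset Strict Implicit. Unset Printing Implicit Defensive.
Import Order.TTheory GRing.Theory Num.Theory.
Import numFieldNormedType.Exports.
Local Open Scope ring_scope.

Definition basis_vec (R : realType) (n : nat) (i : 'I_n) : 'rV[R]_n :=
  delta_mx 0 i.

Definition grad (R : realType) (n : nat) (f : 'rV[R]_n -> R) (x : 'rV[R]_n)
  : 'rV[R]_n :=
  \row_(i < n) ('D_(basis_vec R i) f x).

From HB Require Import structures.
From mathcomp Require Import all_boot all_order all_algebra.
From mathcomp Require Import all_classical all_reals all_analysis.
From mathcomp Require Import ring.
Import Order.TTheory GRing.Theory Num.Theory.
Import numFieldNormedType.Exports.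
Local Open Scope ring_scope.

(* Scheme (I) keeps z_k on the line through y_k and x_k, at z_k = y_k + θ_k (x_k - y_k):
   this is just the definition of x_k solved for z_k.  Substituting this expression
   into the updates of z_(k+1) and x_(k+1) eliminates z, and what remains is the
   update rule of scheme (II), so the two sequences agree by induction on k. *)

Section MomentumAlgebra.

Variables (F : fieldType) (V : lmodType F).

Lemma affine_combE (a : F) (u v : V) : (1 - a) *: u + a *: v = u + a *: (v - u).
Proof. by rewrite scalerBl scale1r scalerBr addrA addrAC. Qed.

Lemma extrapolation_subr (a : F) (x y : V) :
  y + a *: (x - y) - x = (a - 1) *: (x - y).
Proof. by rewrite scalerBl scale1r addrAC addrC -opprB opprK. Qed.

Lemma affine_comb_extrapolation (a : F) (y z : V) : a != 0 ->
  z = y + a *: ((1 - a^-1) *: y + a^-1 *: z - y).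
Proof.
move=> a_neq0.
by rewrite affine_combE addrAC subrr add0r scalerA mulfV // scale1r addrC subrK.
Qed.

Lemma momentum_step (L t th th' : F) (x y g : V) :
  (1 - th'^-1) *: (x - L^-1 *: g)
    + th'^-1 *: (y + th *: (x - y) - (2 * t * th / L) *: g)
  = x - L^-1 *: g
    + ((th - 1) / th') *: (x - L^-1 *: g - y)
    + ((2 * t - 1) * (th / th')) *: (x - L^-1 *: g - x).
Proof.
set y1 := x - L^-1 *: g; set d := y1 - x.
have y1E : y1 = x + d by rewrite addrC subrK.
have z1E : y + th *: (x - y) - (2 * t * th / L) *: g
           = y + th *: (x - y) + (2 * t * th) *: d.
  by rewrite /d /y1 [x - _ - x]addrAC subrr add0r scalerN scalerA.
have y1_subr : y1 - y = (x - y) + d by rewrite {1}y1E addrAC.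
rewrite affine_combE z1E {2}y1E opprD addrACA extrapolation_subr.
rewrite -{2}[d]scale1r -scalerBl y1_subr -[RHS]addrA; congr (_ + _).
rewrite scalerDr [in RHS]scalerDr !scalerA -[RHS]addrA -scalerDl.
by congr (_ *: _ + _ *: _); ring.
Qed.

End MomentumAlgebra.

Theorem lemma6 (R : realType) (n : nat) (f : 'rV[R]_n -> R)
  (hf : forall x : 'rV[R]_n, differentiable f x)
  (L t : R) (hL : 0 < L) (ht0 : 0 < t) (ht1 : t <= 1)
  (theta : nat -> R) (htheta : forall k, 0 < theta k)
  (x0 : 'rV[R]_n)
  (x y z : nat -> 'rV[R]_n)
  (hx0 : x 0%N = x0) (hy0 : y 0%N = x0) (hz0 : z 0%N = x0)
  (hy : forall k, y k.+1 = x k - L^-1 *: grad f (x k))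
  (hz : forall k, z k.+1 = z k - (2 * t * theta k / L) *: grad f (x k))
  (hx : forall k, x k.+1 =
          (1 - (theta k.+1)^-1) *: y k.+1 + (theta k.+1)^-1 *: z k.+1)
  (x' y' : nat -> 'rV[R]_n)
  (hx'0 : x' 0%N = x0) (hy'0 : y' 0%N = x0)
  (hy' : forall k, y' k.+1 = x' k - L^-1 *: grad f (x' k))
  (hx' : forall k, x' k.+1 =
          y' k.+1 + ((theta k - 1) / theta k.+1) *: (y' k.+1 - y' k)
          + ((2 * t - 1) * (theta k / theta k.+1)) *: (y' k.+1 - x' k)) :
  forall k, x k = x' k /\ y k = y' k.
Proof.
have zE k : z k = y k + theta k *: (x k - y k).
  case: k => [|k]; first by rewrite hx0 hy0 hz0 subrr scaler0 addr0.
  by rewrite hx; apply: affine_comb_extrapolation; rewrite gt_eqF.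
elim=> [|k [xE yE]]; first by rewrite hx0 hx'0 hy0 hy'0.
have y1E : y k.+1 = y' k.+1 by rewrite hy hy' xE.
split=> //.
by rewrite hx hx' -y1E hz zE hy xE yE momentum_step.
Qed.
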